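(* Let $X$ be an irreducible finite dimensional CAT(0) cube complex. For any infinite descending chain $s_1\supsetneq s_2\supsetneq\cdots$ of pairwise strongly separated half-spaces, $\bigcap_n s_n\subset\overline X$ is a single point. In particular, if $\xi_1\ne\xi_2$ are in $\partial_rX$, then there are disjoint strongly separated half-spaces $h_1,h_2$ with $\xi_1\in h_1$ and $\xi_2\in h_2$.
   Context: Conventions. $X$ is a finite-dimensional, second countable CAT(0) cube complex identified with its vertex set. $\mathfrak H$ is the set of half-spaces, $h^*=X\setminus h$; $U_v=\{h:v\in h\}$; Roller compactification $\overline X$ = closure of $\{U_v\}$ in $2^{\mathfrak H}$ (product topology), $\partial X=\overline X\setminus X$; each $\xi\in\overline X$ is a subset $U_\xi$, and $h$ is regarded as the subset $\{\xi:h\in U_\xi\}$ of $\overline X$. Transverse: $h\cap k,h\cap k^*,h^*\cap k,h^*\cap k^*$ all nonempty; strongly separated: no half-space transverse to both. Irreducible: not a nontrivial product. Regular points $\partial_rX$ (irreducible $X$): $\xi\in\partial X$ such that for all $h_1,h_2\in U_\xi$ there is $k\in U_\xi$ with $k\subset h_1\cap h_2$ strongly separated from both. *)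

(* A CAT(0) cube complex is represented combinatorially by its
   1-skeleton, which is a median graph (Chepoi / Roller / Gerasimov); the
   complex is identified with its vertex set, as in the paper's conventions. *)
From Stdlib Require Import List Arith.
Import ListNotations.
Set Implicit Arguments.

Section CubeComplex.
Variable V : Type.
Variable adj : V -> V -> Prop.

Inductive walk : V -> V -> nat -> Prop :=
| walk0 : forall x, walk x x 0
| walkS : forall x y z n, adj x y -> walk y z n -> walk x z (S n).

Definition dist (x y : V) (d : nat) : Prop :=
  walk x y d /\ forall n, walk x y n -> d <= n.

Definition between (x z y : V) : Prop :=
  exists a b, dist x z a /\ dist z y b /\ dist x y (a + b).

Definition median_graph : Prop :=
  (forall x y, adj x y -> adj y x) /\
  (forall x, ~ adj x x) /\
  (forall x y, exists n, walk x y n) /\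
  (forall x y z, exists m,
      (between x m y /\ between y m z /\ between x m z) /\
      forall m', between x m' y /\ between y m' z /\ between x m' z -> m' = m).

Definition convex (S : V -> Prop) : Prop :=
  forall x y z, S x -> S y -> between x z y -> S z.

Definition is_halfspace (h : V -> Prop) : Prop :=
  (exists v, h v) /\ (exists w, ~ h w) /\ convex h /\ convex (fun v => ~ h v).

Definition hcompl (h : V -> Prop) : V -> Prop := fun v => ~ h v.

Definition meets (a b : V -> Prop) : Prop := exists v, a v /\ b v.

Definition transverse (h k : V -> Prop) : Prop :=
  meets h k /\ meets h (hcompl k) /\ meets (hcompl h) k /\
  meets (hcompl h) (hcompl k).

Definition strongly_separated (h k : V -> Prop) : Prop :=
  ~ exists j, is_halfspace j /\ transverse j h /\ transverse j k.

(* finite dimension: bounded size of families of pairwise transverse half-spaces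
   (= maximal number of pairwise crossing hyperplanes = max cube dimension) *)
Definition finite_dimensional : Prop :=
  exists D, forall l : list (V -> Prop),
    Forall is_halfspace l -> ForallOrdPairs transverse l -> length l <= D.

(* second countable: countably many vertices *)
Definition second_countable : Prop :=
  exists f : V -> nat, forall x y, f x = f y -> x = y.

Definition cart_adj (A B : Type) (eA : A -> A -> Prop) (eB : B -> B -> Prop)
  (p q : A * B) : Prop :=
  (eA (fst p) (fst q) /\ snd p = snd q) \/ (fst p = fst q /\ eB (snd p) (snd q)).

Definition irreducible : Prop :=
  ~ exists (A B : Type) (eA : A -> A -> Prop) (eB : B -> B -> Prop) (f : V -> A * B),
      (forall x y, f x = f y -> x = y) /\ (forall p, exists x, f x = p) /\
      (forall x y, adj x y <-> cart_adj eA eB (f x) (f y)) /\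
      (exists a1 a2 : A, a1 <> a2) /\ (exists b1 b2 : B, b1 <> b2).

(* Roller compactification: points are subsets U of the set of half-spaces
   lying in the closure of {U_v} for the product topology on 2^H. *)
Definition in_Xbar (U : (V -> Prop) -> Prop) : Prop :=
  forall l : list (V -> Prop), Forall is_halfspace l ->
    exists v, Forall (fun h => U h <-> h v) l.

Definition is_vertex_point (U : (V -> Prop) -> Prop) (v : V) : Prop :=
  forall h, is_halfspace h -> (U h <-> h v).

Definition in_boundary (U : (V -> Prop) -> Prop) : Prop :=
  in_Xbar U /\ ~ exists v, is_vertex_point U v.

Definition same_point (U U' : (V -> Prop) -> Prop) : Prop :=
  forall h, is_halfspace h -> (U h <-> U' h).

Definition hsubset (a b : V -> Prop) : Prop := forall v, a v -> b v.

Definition regular_point (U : (V -> Prop) -> Prop) : Prop :=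
  in_boundary U /\
  forall h1 h2, is_halfspace h1 -> is_halfspace h2 -> U h1 -> U h2 ->
    exists k, is_halfspace k /\ U k /\ hsubset k (fun v => h1 v /\ h2 v) /\
      strongly_separated k h1 /\ strongly_separated k h2.

End CubeComplex.

(* Every edge of the median graph crosses at most one "gap" s_n \ s_(n+1) of a
   strictly descending chain of half-spaces, so a walk from a vertex of s_(n+d)
   to a vertex outside s_n has length > d; in particular the chain has empty
   intersection.  Hence a half-space h meeting every s_n and every complement
   of s_n is eventually transverse to all of them, which strong separation
   forbids: every half-space eventually contains s_n or is disjoint from it.
   So the only point of the Roller compactification containing all s_n is the
   ultrafilter {h | s_n is contained in h for some n}.
   For distinct regular points pick h with xi1 in h and xi2 in h*; regularity
   yields k in h and k' in h*, strongly separated from h and h*.  A half-space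
   transverse to both k and k' would be transverse to h. *)
From Pilot Require Import Defs.
From Stdlib Require Import List Arith Lia Classical.
Import ListNotations.

Section CubeComplex.
Variable V : Type.
Variable adj : V -> V -> Prop.

Lemma walk_0_eq (x y : V) : walk adj x y 0 -> x = y.
Proof. intro H; inversion H; reflexivity. Qed.

Lemma between_adj (x y m : V) :
  adj x y -> Defs.between adj x m y -> m = x \/ m = y.
Proof.
  intros Hxy [a [b [Hxm [Hmy [_ Hmin]]]]].
  assert (Hab : a + b <= 1) by (apply Hmin; econstructor; [exact Hxy | constructor]).
  destruct a as [|a].
  - left; symmetry; apply walk_0_eq, Hxm.
  - replace b with 0 in Hmy by lia. right; apply walk_0_eq, Hmy.
Qed.

Lemma meets_sym (a b : V -> Prop) : meets a b -> meets b a.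
Proof. intros [v [Ha Hb]]; exists v; split; assumption. Qed.

Lemma meets_compl_of_not_hsubset (a b : V -> Prop) :
  ~ hsubset a b -> meets a (hcompl b).
Proof.
  intro Hab. apply NNPP; intro Hno. apply Hab; intros v Hv.
  apply NNPP; intro Hb. apply Hno; exists v; split; assumption.
Qed.

Lemma meets_of_not_hsubset_compl (a b : V -> Prop) :
  ~ hsubset a (hcompl b) -> meets a b.
Proof.
  intro Hab. apply NNPP; intro Hno. apply Hab; intros v Ha Hb.
  apply Hno; exists v; split; assumption.
Qed.

Lemma halfspace_compl (h : V -> Prop) :
  is_halfspace adj h -> is_halfspace adj (hcompl h).
Proof.
  intros [[v Hv] [[w Hw] [Hcv Hcv']]]. unfold hcompl.
  repeat split; [exists w; exact Hw | exists v; tauto | exact Hcv' |].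
  intros x y z Hx Hy Hxzy Hz.
  apply Hz, (Hcv x y z); [apply NNPP, Hx | apply NNPP, Hy | exact Hxzy].
Qed.

Lemma Xbar_compl (U : (V -> Prop) -> Prop) (h : V -> Prop) :
  in_Xbar adj U -> is_halfspace adj h -> (U (hcompl h) <-> ~ U h).
Proof.
  intros HU Hh.
  destruct (HU [h; hcompl h]) as [v Hv];
    [repeat (apply Forall_cons; [auto using halfspace_compl |]); apply Forall_nil |].
  rewrite !Forall_cons_iff in Hv. unfold hcompl in *; tauto.
Qed.

Lemma transverse_of_nested (j h k k' : V -> Prop) :
  hsubset k h -> hsubset k' (hcompl h) ->
  transverse j k -> transverse j k' -> transverse j h.
Proof.
  intros Hk Hk' [[a [? ?]] [_ [[c [? ?]] _]]] [[b [? ?]] [_ [[d [? ?]] _]]].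
  repeat split; [exists a | exists b | exists c | exists d]; split; auto.
Qed.

Lemma strongly_separated_nested (h k k' : V -> Prop) :
  hsubset k h -> hsubset k' (hcompl h) ->
  strongly_separated adj k h -> strongly_separated adj k k'.
Proof.
  intros Hk Hk' Hkh [j [Hj [Hjk Hjk']]].
  apply Hkh; exists j; split; [exact Hj |].
  split; [exact Hjk | exact (transverse_of_nested j h k k' Hk Hk' Hjk Hjk')].
Qed.

Hypothesis Hmed : median_graph adj.

(* The median m of x, y, z is x or y: if m = x then x lies between y and z,
   both outside B; if m = y then y lies between x and z, both in A. *)
Lemma no_edge_across_gap (A B : V -> Prop) (x y z : V) :
  convex adj A -> convex adj (hcompl B) -> hsubset B A ->
  adj x y -> B x -> ~ A y -> A z -> ~ B z -> False.
Proof.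
  intros HA HB HBA Hxy Bx Ay Az Bz.
  destruct Hmed as [_ [_ [_ Hmedian]]].
  destruct (Hmedian x y z) as [m [[Hxmy [Hymz Hxmz]] _]].
  destruct (between_adj x y m Hxy Hxmy) as [-> | ->].
  - apply (HB y z x); [intro By; exact (Ay (HBA y By)) | exact Bz | exact Hymz |].
    exact Bx.
  - exact (Ay (HA x z y (HBA x Bx) Az Hxmz)).
Qed.

Section DescendingChain.
Variable s : nat -> (V -> Prop).
Hypothesis Hs : forall n, is_halfspace adj (s n).
Hypothesis Hdesc : forall n, hsubset (s (S n)) (s n) /\ exists v, s n v /\ ~ s (S n) v.

Lemma chain_antitone (i j : nat) : i <= j -> hsubset (s j) (s i).
Proof.
  induction 1 as [| j _ IH]; intros v Hv; [exact Hv |].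
  apply IH, (proj1 (Hdesc j)), Hv.
Qed.

Lemma chain_walk_long (x w : V) (d : nat) :
  walk adj x w d -> forall n, s (n + d) x -> ~ s n w -> False.
Proof.
  induction 1 as [x | x y w d Hxy _ IH]; intros n Hx Hw.
  - rewrite Nat.add_0_r in Hx. exact (Hw Hx).
  - destruct (classic (s (n + d) y)) as [Hy | Hy]; [exact (IH n Hy Hw) |].
    destruct (Hdesc (n + d)) as [Hsub [z [Hz Hz']]].
    destruct (Hs (n + d)) as [_ [_ [HA _]]].
    destruct (Hs (S (n + d))) as [_ [_ [_ HB]]].
    rewrite Nat.add_succ_r in Hx.
    exact (no_edge_across_gap _ _ x y z HA HB Hsub Hxy Hx Hy Hz Hz').
Qed.

Lemma chain_eventually_excludes (v : V) : exists n, ~ s n v.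
Proof.
  destruct (Hs 0) as [_ [[w Hw] _]].
  destruct Hmed as [_ [_ [Hconn _]]]. destruct (Hconn v w) as [d Hd].
  exists d; intro Hv. exact (chain_walk_long v w d Hd 0 Hv Hw).
Qed.

Hypothesis Hsep : forall m n, m <> n -> strongly_separated adj (s m) (s n).

Lemma chain_eventually_nested (h : V -> Prop) :
  is_halfspace adj h -> exists n, hsubset (s n) h \/ hsubset (s n) (hcompl h).
Proof.
  intro Hh. apply NNPP; intro Hnone.
  destruct Hh as [[a Ha] [[b Hb] Hconv]].
  destruct (chain_eventually_excludes a) as [N HN].
  destruct (chain_eventually_excludes b) as [M HM].
  assert (Htr : forall n, N + M <= n -> transverse h (s n)).
  { intros n Hn.
    assert (Hout : forall k v, ~ s k v -> k <= n -> hcompl (s n) v)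
      by (intros k v Hk Hkn Hv; exact (Hk (chain_antitone k n Hkn v Hv))).
    repeat split; try apply meets_sym.
    - apply meets_of_not_hsubset_compl; intro H; apply Hnone; eauto.
    - exists a; split; [apply (Hout N); [exact HN | lia] | exact Ha].
    - apply meets_compl_of_not_hsubset; intro H; apply Hnone; eauto.
    - exists b; split; [apply (Hout M); [exact HM | lia] | exact Hb]. }
  apply (Hsep (N + M) (S (N + M))); [lia |].
  exists h; split; [split; [exists a | split; [exists b |]]; assumption |].
  split; apply Htr; lia.
Qed.

Definition chain_limit (h : V -> Prop) : Prop := exists n, hsubset (s n) h.

Lemma chain_limit_compl (h : V -> Prop) (n : nat) :
  hsubset (s n) (hcompl h) -> ~ chain_limit h.
Proof.
  intros Hn [m Hm]. destruct (Hs (n + m)) as [[u Hu] _].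
  apply (Hn u);
    [apply (chain_antitone n (n + m)) | apply Hm, (chain_antitone m (n + m))];
    (lia || exact Hu).
Qed.

Lemma chain_eventually_nested_list (l : list (V -> Prop)) :
  Forall (is_halfspace adj) l ->
  exists N, Forall (fun h => hsubset (s N) h \/ hsubset (s N) (hcompl h)) l.
Proof.
  induction 1 as [| h l Hh _ [N HN]]; [exists 0; constructor |].
  destruct (chain_eventually_nested h Hh) as [M HM].
  assert (Hlater : forall k h', k <= N + M ->
            hsubset (s k) h' \/ hsubset (s k) (hcompl h') ->
            hsubset (s (N + M)) h' \/ hsubset (s (N + M)) (hcompl h'))
    by (intros k h' Hk [H | H]; [left | right]; intros v Hv;
        apply H, (chain_antitone k (N + M) Hk), Hv).
  exists (N + M); constructor.
  - apply (Hlater M); [lia | exact HM].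
  - revert HN; apply Forall_impl; intro h'; apply (Hlater N); lia.
Qed.

Lemma chain_limit_in_Xbar : in_Xbar adj chain_limit.
Proof.
  intros l Hl. destruct (chain_eventually_nested_list l Hl) as [N HN].
  destruct (Hs N) as [[v Hv] _]. exists v.
  revert HN; apply Forall_impl; intros h [Hsub | Hsub].
  - split; [intros _; exact (Hsub v Hv) | intros _; exists N; exact Hsub].
  - split; intro H; exfalso;
      [exact (chain_limit_compl h N Hsub H) | exact (Hsub v Hv H)].
Qed.

Lemma chain_limit_unique (zeta : (V -> Prop) -> Prop) :
  in_Xbar adj zeta -> (forall n, zeta (s n)) -> same_point adj zeta chain_limit.
Proof.
  intros Hz Hzs h Hh. destruct (chain_eventually_nested h Hh) as [n Hn].
  destruct (Hz [s n; h]) as [v Hv];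
    [repeat (apply Forall_cons; [auto |]); apply Forall_nil |].
  rewrite !Forall_cons_iff in Hv. destruct Hv as [Hvs [Hvh _]].
  assert (Hsv : s n v) by exact (proj1 Hvs (Hzs n)).
  destruct Hn as [Hsub | Hsub].
  - split; [intros _; exists n; exact Hsub | intros _; apply Hvh, Hsub, Hsv].
  - split; intro H; exfalso;
      [exact (Hsub v Hsv (proj1 Hvh H)) | exact (chain_limit_compl h n Hsub H)].
Qed.

End DescendingChain.

Lemma distinct_points_separated (xi1 xi2 : (V -> Prop) -> Prop) :
  in_Xbar adj xi1 -> in_Xbar adj xi2 -> ~ same_point adj xi1 xi2 ->
  exists h, is_halfspace adj h /\ xi1 h /\ xi2 (hcompl h).
Proof.
  intros X1 X2 Hne. apply NNPP; intro Hno. apply Hne; intros h Hh.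
  pose proof (halfspace_compl h Hh) as Hh'.
  pose proof (Xbar_compl xi1 h X1 Hh) as C1. pose proof (Xbar_compl xi2 h X2 Hh) as C2.
  pose proof (Xbar_compl xi2 _ X2 Hh') as C2'.
  split; intro Hx; apply NNPP; intro Hy; apply Hno;
    [exists h | exists (hcompl h)]; split; (assumption || tauto).
Qed.

Lemma regular_points_split (xi1 xi2 : (V -> Prop) -> Prop) (h : V -> Prop) :
  regular_point adj xi1 -> regular_point adj xi2 -> is_halfspace adj h ->
  xi1 h -> xi2 (hcompl h) ->
  exists h1 h2, is_halfspace adj h1 /\ is_halfspace adj h2 /\
    (forall v, ~ (h1 v /\ h2 v)) /\ strongly_separated adj h1 h2 /\
    xi1 h1 /\ xi2 h2.
Proof.
  intros [_ R1] [_ R2] Hh H1 H2.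
  pose proof (halfspace_compl h Hh) as Hh'.
  destruct (R1 h h Hh Hh H1 H1) as [k [Hk [Xk [Sk [SSk _]]]]].
  destruct (R2 _ _ Hh' Hh' H2 H2) as [k' [Hk' [Xk' [Sk' _]]]].
  assert (Hkh : hsubset k h) by (intros v Hv; exact (proj1 (Sk v Hv))).
  assert (Hk'h : hsubset k' (hcompl h)) by (intros v Hv; exact (proj1 (Sk' v Hv))).
  exists k, k'; split; [exact Hk | split; [exact Hk' |]].
  split; [intros v [Hv Hv']; exact (Hk'h v Hv' (Hkh v Hv)) |].
  split; [exact (strongly_separated_nested h k k' Hkh Hk'h SSk) |].
  split; assumption.
Qed.

End CubeComplex.

Theorem corollary7p5 (V : Type) (adj : V -> V -> Prop)
  (Hmed : median_graph adj) (Hfd : finite_dimensional adj)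
  (Hsc : second_countable V) (Hirr : irreducible adj) :
  (forall s : nat -> (V -> Prop),
     (forall n, is_halfspace adj (s n)) ->
     (forall n, hsubset (s (S n)) (s n) /\ exists v, s n v /\ ~ s (S n) v) ->
     (forall m n, m <> n -> strongly_separated adj (s m) (s n)) ->
     exists xi, in_Xbar adj xi /\ (forall n, xi (s n)) /\
       forall zeta, in_Xbar adj zeta -> (forall n, zeta (s n)) ->
         same_point adj zeta xi)
  /\
  (forall xi1 xi2, regular_point adj xi1 -> regular_point adj xi2 ->
     ~ same_point adj xi1 xi2 ->
     exists h1 h2, is_halfspace adj h1 /\ is_halfspace adj h2 /\
       (forall v, ~ (h1 v /\ h2 v)) /\ strongly_separated adj h1 h2 /\
       xi1 h1 /\ xi2 h2).
Proof.
  split.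
  - intros s Hs Hdesc Hsep. exists (chain_limit V s). split; [| split].
    + exact (chain_limit_in_Xbar V adj Hmed s Hs Hdesc Hsep).
    + intro n; exists n; intros v Hv; exact Hv.
    + exact (chain_limit_unique V adj Hmed s Hs Hdesc Hsep).
  - intros xi1 xi2 R1 R2 Hne.
    destruct (distinct_points_separated V adj xi1 xi2 (proj1 (proj1 R1))
                (proj1 (proj1 R2)) Hne) as [h [Hh [H1 H2]]].
    exact (regular_points_split V adj xi1 xi2 h R1 R2 Hh H1 H2).
Qed.
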